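(* Let $p_1,\dots,p_5$ be the vertices of a regular simplex in $\mathbb{E}^4$ with edge length $\sqrt2$. Then the minimum radius of a circumscribing cylinder of this simplex is $\sqrt{49/80}=\frac{7\sqrt5}{20}\approx0.7826$, and it is attained by a cylinder whose axis is parallel to $p_2+p_3-p_4-p_5$ (and, by symmetry, to any vector obtained by permuting the vertices).
   Context: A cylinder in $\mathbb{E}^n$ is the set of points at fixed distance $\rho>0$ (its radius) from a line (its axis). A cylinder is circumscribing for a simplex if all vertices of the simplex lie on it. *)

From HB Require Import structures.
From mathcomp Require Import all_boot all_order all_algebra.
Set Implicit Arguments. Unset Strict Implicit. Unset Printing Implicit Defensive.
Import Order.TTheory GRing.Theory Num.Theory.
Local Open Scope ring_scope.

(* Euclidean space E^4 is modelled as row vectors 'rV[R]_4 over a real closed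
   field R (this includes the real numbers). *)

Definition dotv (R : rcfType) (n : nat) (u v : 'rV[R]_n) : R :=
  \sum_(i < n) u 0 i * v 0 i.

Definition enorm (R : rcfType) (n : nat) (u : 'rV[R]_n) : R :=
  Num.sqrt (dotv u u).

Definition dist_to_line_eq (R : rcfType) (n : nat)
  (x a d : 'rV[R]_n) (rho : R) : Prop :=
  (exists t : R, enorm (x - (a + t *: d)) = rho) /\
  (forall s : R, rho <= enorm (x - (a + s *: d))).

Definition circumscribing_cylinder (R : rcfType) (n k : nat)
  (p : 'I_k -> 'rV[R]_n) (a d : 'rV[R]_n) (rho : R) : Prop :=
  d != 0 /\ 0 < rho /\ forall i, dist_to_line_eq (p i) a d rho.

Definition regular_simplex_sqrt2 (R : rcfType) (p : 'I_5 -> 'rV[R]_4) : Prop :=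
  forall i j : 'I_5, i != j -> enorm (p i - p j) = Num.sqrt 2.

Definition parallel (R : rcfType) (n : nat) (d v : 'rV[R]_n) : Prop :=
  exists c : R, c != 0 /\ d = c *: v.

From HB Require Import structures.
From mathcomp Require Import all_boot all_order all_algebra.
From mathcomp Require Import ring lra.
Import Order.TTheory GRing.Theory Num.Theory.
Set Implicit Arguments. Unset Strict Implicit. Unset Printing Implicit Defensive.
Local Open Scope ring_scope.

(* Translate the simplex so that its centroid is the origin: the vertices [u_i]
   then satisfy [<u_i, u_j> = delta_ij - 1/5] and form a tight frame of E^4, so
   every inner product is computed from frame coordinates.  For an axis
   [{c + t d}] put [alpha_i = <d, u_i>] and [gamma_i = <c, u_i>]; then
   [sum alpha = sum gamma = 0], and summing the five distance equations, their
   products with [alpha_i] and their squares gives [sum alpha^3 = 0] and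
   [80 rho^2 D^2 = 44 D^2 + 20 sum alpha^4] with [D = sum alpha^2].  Five
   reals with vanishing first and third power sums satisfy
   [(sum alpha^2)^2 <= 4 sum alpha^4], whence [rho^2 >= 49/80].  Equality holds
   for [alpha = (1, 1, -1, -1, 0)], i.e. [d = u_i + u_j - u_k - u_l], with the
   axis through [u_m / 8]. *)

Section Euclidean.
Variables (R : rcfType) (n : nat).
Implicit Types (u v w : 'rV[R]_n) (k : R).

Lemma dotvC u v : dotv u v = dotv v u.
Proof. by apply: eq_bigr => i _; rewrite mulrC. Qed.

Lemma dotvDl u v w : dotv (u + v) w = dotv u w + dotv v w.
Proof. by rewrite /dotv -big_split; apply: eq_bigr => i _; rewrite mxE mulrDl. Qed.

Lemma dotvZl k u w : dotv (k *: u) w = k * dotv u w.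
Proof. by rewrite /dotv mulr_sumr; apply: eq_bigr => i _; rewrite mxE mulrA. Qed.

Lemma dotvNl u w : dotv (- u) w = - dotv u w.
Proof. by rewrite -scaleN1r dotvZl mulN1r. Qed.

Lemma dotvBl u v w : dotv (u - v) w = dotv u w - dotv v w.
Proof. by rewrite dotvDl dotvNl. Qed.

Lemma dotv0l w : dotv 0 w = 0.
Proof. by rewrite -(scale0r 0) dotvZl mul0r. Qed.

Lemma dotv0r w : dotv w 0 = 0.
Proof. by rewrite dotvC dotv0l. Qed.

Lemma dotvDr u v w : dotv w (u + v) = dotv w u + dotv w v.
Proof. by rewrite dotvC dotvDl !(dotvC w). Qed.

Lemma dotvZr k u w : dotv w (k *: u) = k * dotv w u.
Proof. by rewrite dotvC dotvZl dotvC. Qed.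

Lemma dotvNr u w : dotv w (- u) = - dotv w u.
Proof. by rewrite dotvC dotvNl dotvC. Qed.

Lemma dotvBr u v w : dotv w (u - v) = dotv w u - dotv w v.
Proof. by rewrite dotvDr dotvNr. Qed.

Lemma dotv_suml (I : finType) (F : I -> 'rV[R]_n) w :
  dotv (\sum_i F i) w = \sum_i dotv (F i) w.
Proof. by apply: (big_morph (fun u => dotv u w)) => [u v|]; rewrite ?dotvDl ?dotv0l. Qed.

Lemma dotv_sumr (I : finType) (F : I -> 'rV[R]_n) w :
  dotv w (\sum_i F i) = \sum_i dotv w (F i).
Proof. by rewrite dotvC dotv_suml; apply: eq_bigr => i _; rewrite dotvC. Qed.

Lemma dotv_ge0 u : 0 <= dotv u u.
Proof. by apply: sumr_ge0 => i _; rewrite -expr2 sqr_ge0. Qed.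

Lemma dotv_eq0 u : (dotv u u == 0) = (u == 0).
Proof.
apply/eqP/eqP => [u0|->]; last exact: dotv0l.
apply/rowP => i; apply/eqP; rewrite mxE -[_ == 0]orbb -mulf_eq0.
by rewrite (psumr_eq0P _ u0) // => j _; rewrite -expr2 sqr_ge0.
Qed.

Lemma dotv_gt0 u : u != 0 -> 0 < dotv u u.
Proof. by rewrite lt_def dotv_eq0 dotv_ge0 andbT. Qed.

Lemma enorm_sqr u : enorm u ^+ 2 = dotv u u.
Proof. by rewrite sqr_sqrtr // dotv_ge0. Qed.

Lemma dotv_subZ_mul w d k :
  dotv (w - k *: d) (w - k *: d) * dotv d d =
  dotv w w * dotv d d - dotv w d ^+ 2 + (k * dotv d d - dotv w d) ^+ 2.
Proof. by rewrite !(dotvBl, dotvBr, dotvZl, dotvZr) (dotvC d w); ring. Qed.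

Lemma dist_to_line_eqP (x a d : 'rV[R]_n) rho : d != 0 -> 0 <= rho ->
  dist_to_line_eq x a d rho <->
  rho ^+ 2 * dotv d d = dotv (x - a) (x - a) * dotv d d - dotv (x - a) d ^+ 2.
Proof.
move=> /dotv_gt0 d_gt0 rho_ge0.
have shift s : x - (a + s *: d) = (x - a) - s *: d by rewrite opprD addrA.
set w := x - a in shift *; set s0 := dotv w d / dotv d d.
have s0E : s0 * dotv d d - dotv w d = 0 by rewrite mulfVK ?subrr // gt_eqF.
have rho_le s : (rho <= enorm (w - s *: d)) =
    (rho ^+ 2 * dotv d d <= dotv (w - s *: d) (w - s *: d) * dotv d d).
  by rewrite ler_pM2r // -{1}(ger0_norm rho_ge0) -sqrtr_sqr ler_sqrt // dotv_ge0.
split=> [[[t rhoE] rho_min] | rhoE].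
  apply/eqP; rewrite eq_le; apply/andP; split.
    by have := rho_min s0; rewrite shift rho_le dotv_subZ_mul s0E expr0n addr0.
  by rewrite -rhoE shift enorm_sqr dotv_subZ_mul lerDl sqr_ge0.
split=> [|s]; last by rewrite shift rho_le dotv_subZ_mul -rhoE lerDl sqr_ge0.
exists s0; rewrite shift -[RHS]ger0_norm // -sqrtr_sqr; congr Num.sqrt.
apply: (mulIf (lt0r_neq0 d_gt0)).
by rewrite dotv_subZ_mul s0E expr0n addr0.
Qed.

Lemma dist_to_line_eq_sub (x a d v : 'rV[R]_n) rho :
  dist_to_line_eq (x - v) (a - v) d rho <-> dist_to_line_eq x a d rho.
Proof.
have shift t : x - v - (a - v + t *: d) = x - (a + t *: d).
  by rewrite -addrA -opprD addrA [v + _]addrC subrK.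
by rewrite /dist_to_line_eq; split=> -[[t rhoE] rho_min]; split=> [|s];
  do ?exists t; rewrite ?shift // -shift.
Qed.

Lemma circumscribing_cylinder_sub (m : nat) (p : 'I_m -> 'rV[R]_n) (a d v : 'rV[R]_n) rho :
  circumscribing_cylinder (fun i => p i - v) (a - v) d rho <->
  circumscribing_cylinder p a d rho.
Proof.
by split=> -[d_neq0 [rho_gt0 p_on]]; split=> //; split=> // i; apply/dist_to_line_eq_sub.
Qed.

End Euclidean.

Lemma sumr_nat_eq (R : pzSemiRingType) (I : finType) (j : I) :
  \sum_i ((i == j)%:R : R) = 1.
Proof. by rewrite (bigD1 j) //= eqxx big1 ?addr0 // => i /negbTE ->. Qed.

Lemma exists_notin (T : finType) (s : seq T) : (size s < #|T|)%N -> exists x, x \notin s.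
Proof.
move=> s_small; have : (0 < #|[predC s]|)%N.
  by rewrite -(ltn_add2l #|s|) addn0 cardC (leq_ltn_trans (card_size s)).
by case/card_gt0P => x; rewrite inE => xNs; exists x.
Qed.

Lemma mem_uniq_full (T : finType) (s : seq T) x : uniq s -> size s = #|T| -> x \in s.
Proof.
move=> s_uniq s_full; apply/negPn/negP => xNs.
have /card_uniqP card_xs : uniq (x :: s) by rewrite /= xNs.
by have := max_card (mem (x :: s)); rewrite card_xs /= s_full ltnn.
Qed.

Lemma signed_indicator_sqr (R : pzRingType) (m i j k l x : 'I_5) :
  uniq [:: m; i; j; k; l] ->
  ((x == i)%:R + (x == j)%:R - (x == k)%:R - (x == l)%:R) ^+ 2 = 1 - (x == m)%:R :> R.
Proof.
set s := [:: m; i; j; k; l] => s_uniq.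
have [n n_lt5 ->] : exists2 n, (n < 5)%N & x = nth ord0 s n.
  have xs : x \in s by apply: mem_uniq_full; rewrite ?card_ord.
  by exists (index x s); rewrite ?index_mem ?nth_index.
have nthE n' : (n' < 5)%N -> (nth ord0 s n == nth ord0 s n') = (n == n').
  by move=> n'_lt5; rewrite nth_uniq.
rewrite -[i]/(nth ord0 s 1) -[j]/(nth ord0 s 2) -[k]/(nth ord0 s 3).
rewrite -[l]/(nth ord0 s 4) -[m]/(nth ord0 s 0) !nthE // {nthE}.
case: n n_lt5 => [|[|[|[|[|]]]]] //= _;
  by rewrite ?(addr0, add0r, subr0, sub0r, subrr, expr2, mulr0, mulr1, mulrNN).
Qed.

Lemma sum_ord5 (V : nmodType) (f : 'I_5 -> V) :
  \sum_i f i = f ord0 + f (inord 1) + f (inord 2) + f (inord 3) + f (inord 4).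
Proof.
rewrite !big_ord_recl big_ord0 addr0 !addrA.
by congr (_ + _ + _ + _ + _); congr f; apply: val_inj; rewrite /= inordK.
Qed.

Section TightFrame.
Variables (R : rcfType) (n : nat) (u : 'I_n.+1 -> 'rV[R]_n).
Hypothesis sum_u : \sum_i u i = 0.
Hypothesis dot_u : forall i j, dotv (u i) (u j) = (i == j)%:R - n.+1%:R^-1.

Let v (j : 'I_n) := u (widen_ord (leqnSn n) j).

Lemma frame_orthogonal_eq0 w : (forall i, dotv w (u i) = 0) -> w = 0.
Proof.
move=> w_orth; pose U : 'M[R]_n := \matrix_j v j.
have UUtE j k : (U *m U^T) j k = dotv (v j) (v k).
  by rewrite !mxE; apply: eq_bigr => l _; rewrite !mxE.
have sum_v : \sum_j v j = - u ord_max.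
  by apply/eqP; rewrite -subr_eq0 opprK; move: sum_u; rewrite big_ord_recr => ->.
have v_neq_max j : (widen_ord (leqnSn n) j == ord_max) = false.
  by apply/negbTE; rewrite -val_eqE /= neq_ltn ltn_ord.
(* [U U^T = 1 - J/(n+1)] with [J] the all-ones matrix, whose inverse is [1 + J]. *)
have UUt_inv : U *m (U^T *m (1%:M + const_mx 1)) = 1%:M.
  apply/matrixP => j k; rewrite mulmxA mulmxDr mulmx1 mxE UUtE.
  have -> : (U *m U^T *m const_mx 1) j k = n.+1%:R^-1.
    rewrite mxE; transitivity (dotv (v j) (\sum_l v l)).
      by rewrite dotv_sumr; apply: eq_bigr => l _; rewrite UUtE mxE mulr1.
    by rewrite sum_v dotvNr dot_u v_neq_max sub0r opprK.
  by rewrite dot_u -val_eqE [RHS]mxE /= subrK.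
have Ut_unit : U^T \in unitmx by rewrite unitmx_tr; case: (mulmx1_unit UUt_inv).
have wUt : w *m U^T = 0.
  apply/rowP => j; rewrite [RHS]mxE -(w_orth (widen_ord (leqnSn n) j)) !mxE.
  by apply: eq_bigr => l _; rewrite !mxE.
by rewrite -(mulmxK Ut_unit w) wUt mul0mx.
Qed.

Lemma frame_expansion w : w = \sum_i dotv w (u i) *: u i.
Proof.
apply/eqP; rewrite -subr_eq0; apply/eqP/frame_orthogonal_eq0 => j.
rewrite dotvBl dotv_suml.
under eq_bigr => i _ do rewrite dotvZl dot_u mulrBr.
rewrite sumrB -mulr_suml -dotv_sumr sum_u dotv0r mul0r subr0.
rewrite (bigD1 j) //= eqxx mulr1 big1 ?addr0 ?subrr // => i /negbTE ->.
by rewrite mulr0.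
Qed.

Lemma frame_dotv w z : dotv w z = \sum_i dotv w (u i) * dotv z (u i).
Proof.
rewrite {1}(frame_expansion w) dotv_suml.
by apply: eq_bigr => i _; rewrite dotvZl (dotvC (u i)).
Qed.

End TightFrame.

Definition centroid (R : rcfType) (n k : nat) (p : 'I_k -> 'rV[R]_n) : 'rV[R]_n :=
  k%:R^-1 *: \sum_i p i.

Section RegularSimplex.
Variables (R : rcfType) (n k : nat) (p : 'I_k.+1 -> 'rV[R]_n).

Lemma sum_sub_centroid : \sum_i (p i - centroid p) = 0.
Proof.
by rewrite sumrB sumr_const card_ord -scaler_nat /centroid scalerA mulfV ?scale1r ?subrr ?pnatr_eq0.
Qed.

Hypothesis edge_sqrt2 : forall i j, i != j -> enorm (p i - p j) = Num.sqrt 2.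

Lemma dotv_sub_centroid i j :
  dotv (p i - centroid p) (p j - centroid p) = (i == j)%:R - k.+1%:R^-1.
Proof.
pose N i := dotv (p i) (p i); set S := \sum_l N l.
have k1_neq0 : 1 + k%:R != 0 :> R by rewrite addrC natr1 pnatr_eq0.
have sum_const (x : R) : \sum_(l < k.+1) x = k.+1%:R * x.
  by rewrite sumr_const card_ord mulr_natl.
have dot_p i1 i2 : dotv (p i1) (p i2) = (N i1 + N i2) / 2 - 1 + (i1 == i2)%:R.
  have [<-|ne] := eqVneq i1 i2; first by rewrite /N /=; field.
  have := congr1 (fun x => x ^+ 2) (edge_sqrt2 ne).
  by rewrite enorm_sqr sqr_sqrtr // !(dotvBl, dotvBr) (dotvC (p i2)) /N /=; lra.
have dot_g i1 :
    dotv (p i1) (centroid p) = (k.+1%:R / 2 * N i1 + S / 2 - k.+1%:R + 1) / k.+1%:R.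
  rewrite dotvZr dotv_sumr mulrC; congr (_ / _).
  under eq_bigr => l _ do rewrite dot_p eq_sym.
  rewrite big_split /= sumr_nat_eq sumrB !sum_const -mulr_suml big_split /=.
  by rewrite sum_const -/S; ring.
have dot_gg : dotv (centroid p) (centroid p) = (S - k.+1%:R + 1) / k.+1%:R.
  rewrite {1}/centroid dotvZl dotv_suml.
  under eq_bigr => l _ do rewrite dot_g.
  rewrite -mulr_suml !big_split /= -mulr_sumr sumrN !sum_const -/S.
  by field.
rewrite !(dotvBl, dotvBr) (dotvC (centroid p)) dot_p !dot_g dot_gg.
by field.
Qed.

End RegularSimplex.

Section PowerSums.
Variable R : rcfType.

(* With [e4], [e5] the elementary symmetric functions, the [a i] are the roots
   of [P = x^5 - D/2 x^3 + e4 x - e5]; summing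
   [x P(x) = x^2 (x^2 - D/4)^2 + (e4 - D^2/16) x^2 - e5 x] over them gives
   [e4 <= D^2/16], and Newton's identity [4 p4 = 2 D^2 - 16 e4] concludes.
   Equality holds at [(t, t, -t, -t, 0)]. *)
Lemma sqr_sum_sqr_le (a : 'I_5 -> R) :
  \sum_i a i = 0 -> \sum_i a i ^+ 3 = 0 ->
  (\sum_i a i ^+ 2) ^+ 2 <= 4 * \sum_i a i ^+ 4.
Proof.
rewrite !sum_ord5.
move: (a ord0) (a (inord 1)) (a (inord 2)) (a (inord 3)) (a (inord 4)) => a0 a1 a2 a3 a4.
move/eqP; rewrite addrC addr_eq0 => /eqP ->.
set D := _ + _ + (- _) ^+ 2; set p4 := _ + _ + (- _) ^+ 4 => p3_eq0.
set e4 := a0 * a1 * a2 * a3 -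
  (a0 * a1 * a2 + a0 * a1 * a3 + a0 * a2 * a3 + a1 * a2 * a3) * (a0 + a1 + a2 + a3).
set e5 := - (a0 * a1 * a2 * a3 * (a0 + a1 + a2 + a3)).
set rs := [:: a0; a1; a2; a3; - (a0 + a1 + a2 + a3)].
have per_root x : x \in rs ->
    x ^+ 2 * (x ^+ 2 - D / 4) ^+ 2 + (e4 - D ^+ 2 / 16) * x ^+ 2 = e5 * x.
  have -> : x ^+ 2 * (x ^+ 2 - D / 4) ^+ 2 + (e4 - D ^+ 2 / 16) * x ^+ 2 =
      x * ((x - a0) * (x - a1) * (x - a2) * (x - a3) * (x + (a0 + a1 + a2 + a3)) +
      (a0 ^+ 3 + a1 ^+ 3 + a2 ^+ 3 + a3 ^+ 3 + (- (a0 + a1 + a2 + a3)) ^+ 3) / 3 * x ^+ 2) +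
      e5 * x.
    by rewrite /D /e4 /e5; field.
  rewrite p3_eq0 mul0r mul0r addr0 !inE => /orP[|/orP[|/orP[|/orP[]]]] /eqP ->;
    by rewrite ?subrr ?addNr ?(mulr0, mul0r) add0r.
have sum_sqr : \sum_(x <- rs) x ^+ 2 = D by rewrite !big_cons big_nil /D; ring.
have sum_x : \sum_(x <- rs) x = 0 by rewrite !big_cons big_nil; ring.
have e4_le : (e4 - D ^+ 2 / 16) * D <= 0.
  have : \sum_(x <- rs) x ^+ 2 * (x ^+ 2 - D / 4) ^+ 2 +
      (e4 - D ^+ 2 / 16) * \sum_(x <- rs) x ^+ 2 = 0.
    by rewrite mulr_sumr -big_split /= (eq_big_seq _ per_root) -mulr_sumr sum_x mulr0.
  rewrite sum_sqr; move/eqP; rewrite addrC addr_eq0 => /eqP ->; rewrite oppr_le0.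
  by apply: sumr_ge0 => x _; rewrite mulr_ge0 ?sqr_ge0.
have newton : 4 * p4 = 2 * D ^+ 2 - 16 * e4 by rewrite /p4 /D /e4; ring.
have D_ge0 : 0 <= D by rewrite -sum_sqr sumr_ge0 // => x _; rewrite sqr_ge0.
have [D0|D_neq0] := eqVneq D 0.
  have pow4_ge0 (x : R) : 0 <= x ^+ 4 by rewrite -[4%N]/(2 * 2)%N exprM sqr_ge0.
  by rewrite D0 expr0n mulr_ge0 // !addr_ge0.
have : e4 - D ^+ 2 / 16 <= 0.
  by rewrite -(pmulr_lle0 _ (_ : 0 < D)) // lt_def D_neq0.
lra.
Qed.

(* [a i = <d, u_i>] and [g i = <c, u_i>] are the frame coordinates of the
   direction and of a point of the axis, [D = |d|^2], [C = |c|^2], [b = <c, d>];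
   the last hypothesis is the distance equation of vertex [i] multiplied by [D]. *)
Lemma radius_sqr_ge (a g : 'I_5 -> R) (D C b r2 : R) :
  D = \sum_i a i ^+ 2 -> 0 < D -> C = \sum_i g i ^+ 2 -> b = \sum_i a i * g i ->
  \sum_i a i = 0 -> \sum_i g i = 0 ->
  (forall i, r2 * D = (4 / 5 - 2 * g i + C) * D - (a i - b) ^+ 2) ->
  49 / 80 <= r2.
Proof.
move=> DE D_gt0 CE bE sum_a sum_g radiusE.
set K := 4 / 5 + C - r2.
have gE i : 2 * D * g i = K * D - (a i - b) ^+ 2 by have := radiusE i; rewrite /K; lra.
have sum_sqr_sub : \sum_i (a i - b) ^+ 2 = D + 5 * b ^+ 2.
  have -> : \sum_i (a i - b) ^+ 2 = \sum_i a i ^+ 2 - 2 * b * \sum_i a i + 5 * b ^+ 2.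
    by rewrite !sum_ord5; ring.
  by rewrite -DE sum_a mulr0 subr0.
have KDE : K * D = (D + 5 * b ^+ 2) / 5.
  have : \sum_i 2 * D * g i = 0 by rewrite -mulr_sumr sum_g mulr0.
  under eq_bigr do rewrite gE.
  rewrite sumrB sumr_const card_ord sum_sqr_sub => /eqP; rewrite subr_eq0 => /eqP <-.
  by rewrite -mulr_natl; field.
have sum_a3 : \sum_i a i ^+ 3 = 0.
  have : \sum_i a i * (2 * D * g i) = 2 * D * b.
    by rewrite bE mulr_sumr; apply: eq_bigr => i _; ring.
  under eq_bigr do rewrite gE.
  have -> : \sum_i a i * (K * D - (a i - b) ^+ 2) = K * D * \sum_i a i -
      (\sum_i a i ^+ 3 - 2 * b * \sum_i a i ^+ 2 + b ^+ 2 * \sum_i a i).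
    by rewrite !sum_ord5; ring.
  by rewrite -DE sum_a !mulr0 addr0; lra.
have C4 : 4 * D ^+ 2 * C = \sum_i a i ^+ 4 + 4 * b ^+ 2 * D - D ^+ 2 / 5.
  have : \sum_i (2 * D * g i) ^+ 2 = 4 * D ^+ 2 * C.
    by rewrite CE mulr_sumr; apply: eq_bigr => i _; ring.
  under eq_bigr do rewrite gE.
  have -> : \sum_i (K * D - (a i - b) ^+ 2) ^+ 2 =
      5 * (K * D) ^+ 2 - 2 * (K * D) * \sum_i (a i - b) ^+ 2 + \sum_i a i ^+ 4 -
      4 * b * \sum_i a i ^+ 3 + 6 * b ^+ 2 * \sum_i a i ^+ 2 -
      4 * b ^+ 3 * \sum_i a i + 5 * b ^+ 4.
    by rewrite !sum_ord5; ring.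
  rewrite sum_sqr_sub KDE sum_a3 sum_a -DE => <-.
  by field.
have sum_a4 := sqr_sum_sqr_le sum_a sum_a3; rewrite -DE in sum_a4.
have : 80 * r2 * D ^+ 2 = 44 * D ^+ 2 + 20 * \sum_i a i ^+ 4.
  have -> : 80 * r2 * D ^+ 2 = 64 * D ^+ 2 + 20 * (4 * D ^+ 2 * C) - 80 * (K * D) * D.
    by rewrite /K; field.
  by rewrite C4 KDE; field.
have D2_gt0 : 0 < D ^+ 2 by rewrite exprn_gt0.
move=> r2E; rewrite -(ler_pM2r D2_gt0); lra.
Qed.

End PowerSums.

Section FrameCylinder.
Variables (R : rcfType) (u : 'I_5 -> 'rV[R]_4).
Hypothesis sum_u : \sum_i u i = 0.
Hypothesis dot_u : forall i j, dotv (u i) (u j) = (i == j)%:R - 5^-1.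

Lemma frame_cylinder_radius_ge c d rho :
  circumscribing_cylinder u c d rho -> Num.sqrt (49 / 80) <= rho.
Proof.
move=> [d_neq0 [rho_gt0 u_on]]; have rho_ge0 := ltW rho_gt0.
have frameE := frame_dotv sum_u dot_u.
suff : 49 / 80 <= rho ^+ 2.
  by rewrite -{2}(ger0_norm rho_ge0) -sqrtr_sqr ler_sqrt // sqr_ge0.
apply: (@radius_sqr_ge _ (fun i => dotv d (u i)) (fun i => dotv c (u i))
  (dotv d d) (dotv c c) (dotv c d)).
- by rewrite frameE; apply: eq_bigr => i _; rewrite expr2.
- exact: dotv_gt0.
- by rewrite frameE; apply: eq_bigr => i _; rewrite expr2.
- by rewrite frameE; apply: eq_bigr => i _; rewrite mulrC.
- by rewrite -dotv_sumr sum_u dotv0r.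
- by rewrite -dotv_sumr sum_u dotv0r.
- move=> i; have := u_on i; rewrite dist_to_line_eqP // => ->.
  rewrite !(dotvBl, dotvBr) (dotvC (u i) c) (dotvC (u i) d) dot_u eqxx /=.
  by field.
Qed.

Lemma frame_cylinder_optimal (m i j k l : 'I_5) : uniq [:: m; i; j; k; l] ->
  circumscribing_cylinder u (8^-1 *: u m) (u i + u j - u k - u l) (Num.sqrt (49 / 80)).
Proof.
move=> mijkl; set d := u i + u j - u k - u l.
have dot_ud x : dotv (u x) d ^+ 2 = 1 - (x == m)%:R.
  rewrite -(signed_indicator_sqr _ x mijkl); congr (_ ^+ 2).
  by rewrite /d !(dotvDr, dotvNr) !dot_u; ring.
have dot_dd : dotv d d = 4.
  rewrite (frame_dotv sum_u dot_u); under eq_bigr do rewrite (dotvC d) -expr2 dot_ud.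
  by rewrite sumrB sumr_const card_ord sumr_nat_eq; lra.
have dot_umd : dotv (u m) d = 0 by apply/eqP; rewrite -sqrf_eq0 dot_ud eqxx subrr.
have d_neq0 : d != 0 by rewrite -dotv_eq0 dot_dd pnatr_eq0.
split=> //; split=> [|x]; first by rewrite sqrtr_gt0; lra.
apply/dist_to_line_eqP; rewrite ?sqrtr_ge0 // sqr_sqrtr; last by lra.
rewrite [X in X ^+ 2]dotvBl dotvZl dot_umd mulr0 subr0 dot_ud dot_dd.
rewrite !(dotvBl, dotvBr, dotvZl, dotvZr) !dot_u !eqxx (eq_sym m x) /=.
lra.
Qed.

End FrameCylinder.

Theorem mainTheorem11 (R : rcfType) (p : 'I_5 -> 'rV[R]_4) :
  regular_simplex_sqrt2 p ->
  (forall (a d : 'rV[R]_4) (rho : R),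
      circumscribing_cylinder p a d rho -> Num.sqrt (49 / 80) <= rho) /\
  (forall i j k l : 'I_5,
      uniq [:: i; j; k; l] ->
      exists (a d : 'rV[R]_4),
        circumscribing_cylinder p a d (Num.sqrt (49 / 80)) /\
        parallel d (p i + p j - p k - p l)).
Proof.
move=> p_regular; set g := centroid p.
have sum_u : \sum_i (p i - g) = 0 := sum_sub_centroid p.
have dot_u := dotv_sub_centroid p_regular.
split=> [a d rho cyl | i j k l ijkl_uniq].
  apply: (frame_cylinder_radius_ge sum_u dot_u (c := a - g) (d := d)).
  exact/circumscribing_cylinder_sub.
have [m m_notin] : exists m, m \notin [:: i; j; k; l].
  by apply: exists_notin; rewrite card_ord.
have mijkl : uniq [:: m; i; j; k; l] by rewrite cons_uniq m_notin.
exists (8^-1 *: (p m - g) + g), ((p i - g) + (p j - g) - (p k - g) - (p l - g)).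
split; first by apply/(circumscribing_cylinder_sub _ _ _ g); rewrite addrK;
  exact: frame_cylinder_optimal.
exists 1; rewrite oner_neq0 scale1r; split=> //.
by apply/rowP => z; rewrite !mxE; ring.
Qed.
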